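(* An $r$-partite partition $\boldsymbol{\lambda}=(\lambda^0\mid\lambda^1\mid\cdots\mid\lambda^{r-1})$ of size $n$ is the cycle type of a square element of $G(r,1,n)$ (i.e. an element of the form $\pi^2$ with $\pi\in G(r,1,n)$) if and only if: (1) each even part in each partition $\lambda^t$ has even multiplicity; and (2) when $r$ is even, the odd parts of $\lambda^1,\lambda^3,\dots,\lambda^{r-1}$ have even multiplicity.
   Context: Let $\mathbb{Z}_r=\{\overline0,\dots,\overline{r-1}\}$. The generalized symmetric group is $G(r,1,n)=\{(z_1,\dots,z_n;\sigma): z_i\in\mathbb{Z}_r,\sigma\in S_n\}$ with product $(z_1,\dots,z_n;\sigma)(z'_1,\dots,z'_n;\sigma')=(z_1+z'_{\sigma^{-1}(1)},\dots,z_n+z'_{\sigma^{-1}(n)};\sigma\sigma')$. For $\pi=(z_1,\dots,z_n;\sigma)$ and a cycle $(u_1,\dots,u_\ell)$ of $\sigma$, its color is $z_{u_1}+\cdots+z_{u_\ell}\in\mathbb{Z}_r$. The cycle type of $\pi$ is the $r$-partite partition $(\lambda^0\mid\cdots\mid\lambda^{r-1})$ where $\lambda^j$ is the partition of the lengths of the cycles of $\sigma$ of color $j$; the sizes sum to $n$. Two elements are conjugate iff they have the same cycle type. *)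

From mathcomp Require Import all_boot all_order all_fingroup.
Set Implicit Arguments. Unset Strict Implicit. Unset Printing Implicit Defensive.
Import GroupScope.

(* Elements of G(r,1,n): (z_1,...,z_n; sigma), z_i in Z_r = 'I_r, sigma in S_n. *)
Definition gelt (r n : nat) := ({ffun 'I_n -> 'I_r} * {perm 'I_n})%type.

(* addition in Z_r (values in 'I_r, reduced mod r; r > 0 whenever 'I_r is inhabited) *)
Definition addZr (r : nat) (a b : 'I_r) : 'I_r := insubd a ((a + b) %% r)%N.

(* (z;s)(z';s') = (z_1 + z'_{s^-1(1)}, ..., z_n + z'_{s^-1(n)}; s s'),
   where s s' is the composite "s after s'"; in mathcomp (s' * s) x = s (s' x). *)
Definition gmul (r n : nat) (p q : gelt r n) : gelt r n :=
  ([ffun i => addZr (p.1 i) (q.1 ((p.2)^-1 i))], q.2 * p.2).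

Definition cycle_color (r n : nat) (p : gelt r n) (C : {set 'I_n}) : nat :=
  ((\sum_(u in C) (p.1 u : nat)) %% r)%N.

Definition cycle_mult (r n : nat) (p : gelt r n) (t : 'I_r) (l : nat) : nat :=
  #|[set C in porbits p.2 | (#|C| == l) && (cycle_color p C == t)]|.

Definition is_rpartition (r n : nat) (lam : 'I_r -> seq nat) : Prop :=
  (forall t, sorted geq (lam t) && all (fun x => 0 < x)%N (lam t)) /\
  (\sum_(t < r) sumn (lam t))%N = n.

Definition has_cycle_type (r n : nat) (p : gelt r n) (lam : 'I_r -> seq nat) : Prop :=
  forall (t : 'I_r) (l : nat), count_mem l (lam t) = cycle_mult p t l.

From mathcomp Require Import all_boot all_order all_fingroup zify.
Set Implicit Arguments. Unset Strict Implicit. Unset Printing Implicit Defensive.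

(* Write [pi = (z; s)].  Squaring turns an [s]-cycle of odd length into one cycle of
   [s * s], of the same length and of color twice the color of the [s]-cycle, and an
   [s]-cycle of even length [2l] into two cycles of length [l] and equal color.  Hence
   [C |-> s @: C] is an involution on the cycles of [pi * pi] of given length and color,
   whose fixed points have odd length and even color when [r] is even; this gives the
   parity conditions.  Conversely, the cycles of each length [l] and color [t] are
   realised either one by one, as squares of [l]-cycles of color [t / 2] when [l] is
   odd and [t] has a half in [Z_r], or two by two, as squares of [2l]-cycles of
   color [t]. *)

Lemma fixfree_involution_card_even (T : finType) (S : {set T}) (f : T -> T) :
  {in S, forall x, f x \in S} -> {in S, involutive f} -> {in S, forall x, f x != x} ->
  ~~ odd #|S|.
Proof.
have [m] := ubnP #|S|; elim: m S => // m IH S; rewrite ltnS => leS fS fK fx.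
have [->|[x xS]] := set_0Vmem S; first by rewrite cards0.
have fxS : f x \in S :\ x by rewrite !inE fS // andbT fx.
set S' := S :\ x :\ f x.
have cardS : #|S| = #|S'|.+2 by rewrite (cardsD1 x S) xS (cardsD1 (f x)) fxS.
have memS' y : y \in S' -> [/\ y \in S, y != x & y != f x].
  by rewrite !inE => /and3P[-> -> ->].
rewrite cardS /= negbK; apply: IH.
- by rewrite -ltnS -cardS ltnW.
- move=> y /memS'[yS yx yfx]; rewrite !inE fS // andbT; apply/andP; split.
    by apply: contraNneq yx => /(congr1 f); rewrite !fK // => ->.
  by apply: contraNneq yfx => <-; rewrite fK.
- by move=> y /memS'[yS _ _]; apply: fK.
- by move=> y /memS'[yS _ _]; apply: fx.
Qed.

Lemma card_porbit_le_period (T : finType) (s : {perm T}) x k :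
  0 < k -> (s ^+ k)%g x = x -> #|porbit s x| <= k.
Proof.
move=> k_gt0 skx.
have sub : porbit s x \subset [set (s ^+ i)%g x | i : 'I_k].
  apply/subsetP => _ /porbitP[i ->]; apply/imsetP.
  exists (Ordinal (ltn_pmod i k_gt0)) => //=.
  rewrite {1}(divn_eq i k) expgD permM; congr (_ _).
  by rewrite mulnC expgM permX iter_fix.
apply: leq_trans (subset_leq_card sub) _.
by rewrite -[X in _ <= X]card_ord leq_imset_card.
Qed.

Section SquareOrbits.
Variables (T : finType) (s : {perm T}).
Local Notation P := (porbit (s * s)%g).

Lemma porbit_sqr_step x : P ((s * s)%g x) = P x.
Proof. by have := porbit_perm (s * s)%g 1 x; rewrite expg1. Qed.

Lemma imset_porbit_sqr x : s @: P x = P (s x).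
Proof.
have cm i : commute s ((s * s) ^+ i)%g by apply: commuteX; rewrite /commute mulgA.
apply/setP => y; apply/imsetP/porbitP => [[u /porbitP[i ->] ->]|[i ->]].
  by exists i; rewrite -!permM (cm i).
by exists (((s * s) ^+ i)%g x); rewrite ?mem_porbit // -!permM (cm i).
Qed.

Lemma porbit_sqrV x : P (s^-1 x)%g = P (s x).
Proof. by rewrite -{2}(permKV s x) -permM porbit_sqr_step. Qed.

Lemma imset2_porbit_sqr x : s @: (s @: P x) = P x.
Proof. by rewrite !imset_porbit_sqr -permM porbit_sqr_step. Qed.

(* An [s]-stable orbit of [s * s] is an orbit of [s]; if its length [m] were even,
   [(s * s) ^+ m./2] would already fix [x]. *)
Lemma odd_card_porbit_sqr x : s @: P x = P x -> odd #|P x|.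
Proof.
move=> sPx; have sqrX i : ((s * s) ^+ i)%g = (s ^+ i.*2)%g.
  by rewrite -mul2n expgM expgS expg1.
have Ps : P x = porbit s x.
  apply/setP => y; apply/idP/idP => /porbitP[j ->]; first by rewrite sqrX mem_porbit.
  elim: j => [|j IHj]; first by rewrite expg0 perm1 porbit_id.
  by rewrite expgSr permM -sPx; apply: imset_f.
rewrite Ps; set m := #|porbit s x|; apply: contraT => even_m.
have m_gt0 : 0 < m by rewrite lt0n card_porbit_neq0.
have m2 : m./2.*2 = m by rewrite -[RHS]odd_double_half (negbTE even_m).
have h_gt0 : 0 < m./2 by rewrite -double_gt0 m2.
have := @card_porbit_le_period _ (s * s)%g x m./2.
rewrite sqrX m2 permX iter_porbit Ps -/m => /(_ h_gt0 erefl).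
by move: m2 h_gt0; rewrite -muln2; lia.
Qed.

End SquareOrbits.

Lemma val_addZr r (a b : 'I_r) : val (addZr a b) = (a + b) %% r.
Proof. by rewrite val_insubd ltn_pmod // (leq_ltn_trans _ (ltn_ord a)). Qed.

Definition zsum r n (pi : gelt r n) (C : {set 'I_n}) := \sum_(u in C) (pi.1 u : nat).

Lemma cycle_color_porbit_sqr r n (pi : gelt r n) x :
  let P := porbit (pi.2 * pi.2)%g in
  cycle_color (gmul pi pi) (P x) = (zsum pi (P x) + zsum pi (P (pi.2 x))) %% r.
Proof.
rewrite /cycle_color /zsum /=.
under eq_bigr => u _ do rewrite ffunE val_addZr.
rewrite modn_summ big_split /=; congr ((_ + _) %% r).
rewrite -[in LHS](permKV pi.2 x) -imset_porbit_sqr big_imset /=; last exact: in2W perm_inj.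
by under eq_bigr => u _ do rewrite permK; rewrite porbit_sqrV.
Qed.

Lemma even_cycle_mult_sqr r n (pi : gelt r n) (t : 'I_r) l :
  ~~ odd l \/ (~~ odd r /\ odd t) -> ~~ odd (cycle_mult (gmul pi pi) t l).
Proof.
move=> hyp; rewrite /cycle_mult; set s := pi.2.
apply: (@fixfree_involution_card_even _ _ (fun C : {set 'I_n} => s @: C)) => C;
  rewrite !inE => /andP[/imsetP[x _ ->] /andP[/eqP Cl /eqP Ct]].
- rewrite card_imset ?Cl ?eqxx; last exact: perm_inj.
  rewrite imset_porbit_sqr imset_f //= -Ct !cycle_color_porbit_sqr.
  by rewrite -permM porbit_sqr_step addnC.
- exact: imset2_porbit_sqr.
- apply/negP => /eqP fixC; case: hyp => [|[even_r odd_t]].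
    by rewrite -Cl odd_card_porbit_sqr.
  move: odd_t; rewrite -Ct cycle_color_porbit_sqr -imset_porbit_sqr fixC addnn.
  by rewrite odd_mod ?odd_double ?(negbTE even_r).
Qed.

Lemma big_iota_subinterval (F : nat -> nat) N a L : a + L <= N ->
  \sum_(j <- iota 0 N | a <= j < a + L) F j = \sum_(j <- iota a L) F j.
Proof.
move=> aLN; have -> : iota a L = index_iota a (a + L) by rewrite /index_iota addKn.
rewrite (big_nat_widenl _ 0) // (big_nat_widen _ _ _ _ _ aLN) /index_iota subn0.
by apply: eq_bigl => j.
Qed.

(* [Block p k c] describes [pi = (z; s)] on the points [0, ..., bsize - 1].  If [p] is
   false, [s] is the rotation by [k + 1] of [2k + 1] points, so [s * s] is the rotation
   by one.  If [p] is true, [s] is a cycle of length [2(k + 1)] alternating between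
   [[0, k]] and [[k + 1, 2k + 1]], on which [s * s] rotates by one.  In both cases [z]
   is [c] at [0] and [0] elsewhere; it is [bz], and [s] is [broot].  Moreover [brot i]
   is [(s * s) ^+ i], [bkey] labels the cycles of [s * s] (of length [blen]), [bmass]
   gives the sum of [z] over the cycle of a point and [bcolor] the color of every
   cycle of [pi * pi]. *)
Record block := Block { paired : bool; bparam : nat; bweight : nat }.

Definition blen b := if paired b then (bparam b).+1 else (bparam b).*2.+1.
Definition bsize b := if paired b then blen b + blen b else blen b.

Definition brot i b j :=
  if j < blen b then (j + i) %% blen b else blen b + (j - blen b + i) %% blen b.
Definition broot b j :=
  if paired b then (if j < blen b then blen b + j else (j - blen b).+1 %% blen b)
  else (j + (bparam b).+1) %% blen b.
Definition bkey b j := if j < blen b then 0 else blen b.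
Definition bz b j := if j == 0 then bweight b else 0.
Definition bmass b j := if j < blen b then bweight b else 0.
Definition bcolor b := if paired b then bweight b else bweight b + bweight b.

Lemma blen_gt0 b : 0 < blen b.
Proof. by rewrite /blen; case: ifP. Qed.

Definition bounded (f : block -> nat -> nat) := forall b j, j < bsize b -> f b j < bsize b.

Lemma brot_bounded i : bounded (brot i).
Proof.
move=> b j; have := blen_gt0 b; rewrite /brot /bsize => L0.
have := ltn_pmod (j + i) L0; have := ltn_pmod (j - blen b + i) L0.
by case: (paired b); case: ifP => *; lia.
Qed.

Lemma broot_bounded : bounded broot.
Proof.
move=> b j; have := blen_gt0 b; rewrite /broot /bsize => L0.
have := ltn_pmod (j + (bparam b).+1) L0; have := ltn_pmod (j - blen b).+1 L0.
by case: (paired b); [case: ifP => *; lia | move=> *; lia].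
Qed.

Lemma bkey_bounded : bounded bkey.
Proof.
move=> b j; have := blen_gt0 b; rewrite /bkey /bsize.
by case: (paired b); case: ifP => *; lia.
Qed.

Lemma brootK b j : j < bsize b -> broot b (broot b j) = brot 1 b j.
Proof.
case: b => [[] k c]; rewrite /broot /brot /bsize /blen /= => hj.
  case: (ltnP j k.+1) => h; first by rewrite ifF ?addKn ?addn1 //; lia.
  by rewrite ltn_pmod // addn1.
rewrite modnDml hj -addnn.
have -> : j + k.+1 + k.+1 = j + 1 + (k + k).+1 by lia.
by rewrite modnDr.
Qed.

Lemma brotD a c b j : brot a b (brot c b j) = brot (c + a) b j.
Proof.
have L0 := blen_gt0 b; rewrite /brot.
case: (ltnP j (blen b)) => h; first by rewrite ltn_pmod // modnDml addnA.
by rewrite ifF ?addKn ?modnDml ?addnA //; lia.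
Qed.

Lemma brot_blen b : brot (blen b) b =1 brot 0 b.
Proof. by move=> j; rewrite /brot !modnDr !addn0. Qed.

Lemma brot0 b j : j < bsize b -> brot 0 b j = j.
Proof.
rewrite /brot /bsize !addn0 => hj.
case: (ltnP j (blen b)) => h; first by rewrite modn_small.
by rewrite modn_small ?subnKC //; move: hj; case: (paired b); lia.
Qed.

Lemma brot1_inj b j j' : j < bsize b -> j' < bsize b -> brot 1 b j = brot 1 b j' -> j = j'.
Proof.
move=> hj hj' /(congr1 (brot (blen b).-1 b)).
by rewrite !brotD add1n prednK ?blen_gt0 // !brot_blen !brot0.
Qed.

Lemma bkey_orbit b j j' : j < bsize b -> j' < bsize b ->
  (exists i, j' = brot i b j) <-> bkey b j' = bkey b j.
Proof.
have L0 := blen_gt0 b; move=> hj hj'; rewrite /bkey /brot.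
have off j1 : j1 < bsize b -> blen b <= j1 -> j1 - blen b < blen b.
  by rewrite /bsize; case: (paired b); lia.
case: (ltnP j (blen b)) => h; split.
- by case=> i ->; rewrite ltn_pmod.
- case: (ltnP j' (blen b)) => h' e; last by move: e; lia.
  exists (blen b - j + j'); rewrite addnA subnKC ?(ltnW h) //.
  by rewrite addnC modnDr modn_small.
- by case=> i ->; rewrite ifF //; lia.
- case: (ltnP j' (blen b)) => h' e; first by move: e; lia.
  have o1 := off j hj h; have o2 := off j' hj' h'.
  exists (blen b - (j - blen b) + (j' - blen b)); rewrite addnA subnKC ?(ltnW o1) //.
  by rewrite [blen b + (j' - _)]addnC modnDr modn_small // subnKC.
Qed.

Lemma bkey_class_sum b j (F : nat -> nat) : j < bsize b ->
  \sum_(j' <- iota 0 (bsize b) | bkey b j' == bkey b j) F j' =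
  \sum_(j' <- iota (bkey b j) (blen b)) F j'.
Proof.
move=> hj; rewrite -(@big_iota_subinterval F (bsize b)); last first.
  by move: hj; rewrite /bkey /bsize; case: (paired b); case: ifP; lia.
rewrite big_seq_cond [RHS]big_seq_cond; apply: eq_bigl => j'; rewrite mem_iota.
apply/idP/idP; move: hj; rewrite /bkey /bsize; case: (paired b); case: ifP; case: ifP; lia.
Qed.

Lemma bz_class_sum b j : j < bsize b ->
  \sum_(j' <- iota (bkey b j) (blen b)) bz b j' = bmass b j.
Proof.
have L0 := blen_gt0 b; rewrite /bkey /bmass /bz => hj.
case: (ltnP j (blen b)) => h.
  rewrite -(prednK L0) /= big_cons /= big_seq big1 ?addn0 // => x.
  by rewrite mem_iota; case: x.
by rewrite big_seq big1 // => x; rewrite mem_iota; case: x => //; lia.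
Qed.

Lemma bmass_broot b j : j < bsize b -> bmass b j + bmass b (broot b j) = bcolor b.
Proof.
have L0 := blen_gt0 b; rewrite /bmass /broot /bcolor /bsize.
case: (paired b) => /= hj; last by rewrite hj ltn_pmod.
case: (ltnP j (blen b)) => h; last by rewrite ltn_pmod.
by rewrite ifF ?addn0 //; lia.
Qed.

(* A list of blocks is laid out on consecutive intervals of [nat]; [blockmap f] and
   [blockval f] apply the local map or value [f] inside the block of a point. *)
Fixpoint blockmap (f : block -> nat -> nat) (bs : seq block) (x : nat) : nat :=
  if bs is b :: bs' then
    if x < bsize b then f b x else bsize b + blockmap f bs' (x - bsize b)
  else x.

Fixpoint blockval (f : block -> nat -> nat) (bs : seq block) (x : nat) : nat :=
  if bs is b :: bs' then
    if x < bsize b then f b x else blockval f bs' (x - bsize b)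
  else 0.

Definition total_size (bs : seq block) := \sum_(b <- bs) bsize b.

Lemma total_size_cons b bs : total_size (b :: bs) = bsize b + total_size bs.
Proof. exact: big_cons. Qed.

Lemma blockmap_lt f bs x : bounded f -> x < total_size bs -> blockmap f bs x < total_size bs.
Proof.
move=> hf; elim: bs x => [|b bs IH] x //=; rewrite total_size_cons => hx.
case: (ltnP x (bsize b)) => h; first by have := hf b x h; lia.
by have := IH (x - bsize b); lia.
Qed.

Lemma eq_blockmap f g bs x : (forall b j, j < bsize b -> f b j = g b j) ->
  blockmap f bs x = blockmap g bs x.
Proof.
move=> e; elim: bs x => [|b bs IH] x //=.
by case: (ltnP x (bsize b)) => h; rewrite ?e ?IH.
Qed.

Lemma eq_blockval f g bs x : (forall b j, j < bsize b -> f b j = g b j) ->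
  blockval f bs x = blockval g bs x.
Proof.
move=> e; elim: bs x => [|b bs IH] x //=.
by case: (ltnP x (bsize b)) => h; rewrite ?e ?IH.
Qed.

Lemma blockmap_id bs x : blockmap (fun _ j => j) bs x = x.
Proof.
elim: bs x => [|b bs IH] x //=.
by case: (ltnP x (bsize b)) => h //; rewrite IH subnKC.
Qed.

Lemma blockmap_comp f g bs x : bounded g -> x < total_size bs ->
  blockmap f bs (blockmap g bs x) = blockmap (fun b j => f b (g b j)) bs x.
Proof.
move=> hg; elim: bs x => [|b bs IH] x //=; rewrite total_size_cons => hx.
case: (ltnP x (bsize b)) => h; first by rewrite hg.
by rewrite ifF ?addKn ?IH //; lia.
Qed.

Lemma blockval_comp f g bs x : bounded g -> x < total_size bs ->
  blockval f bs (blockmap g bs x) = blockval (fun b j => f b (g b j)) bs x.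
Proof.
move=> hg; elim: bs x => [|b bs IH] x //=; rewrite total_size_cons => hx.
case: (ltnP x (bsize b)) => h; first by rewrite hg.
by rewrite ifF ?addKn ?IH //; lia.
Qed.

Lemma blockvalD f g bs x :
  blockval f bs x + blockval g bs x = blockval (fun b j => f b j + g b j) bs x.
Proof. by elim: bs x => [|b bs IH] x //=; case: ifP. Qed.

Lemma blockval_const c bs x : x < total_size bs -> blockval (fun _ _ => c) bs x = c.
Proof.
elim: bs x => [|b bs IH] x; first by rewrite /total_size big_nil.
by rewrite total_size_cons /=; case: ifP => // h hx; apply: IH; lia.
Qed.

Lemma blockmap_inj f bs x y : bounded f ->
  (forall b j j', j < bsize b -> j' < bsize b -> f b j = f b j' -> j = j') ->
  x < total_size bs -> y < total_size bs -> blockmap f bs x = blockmap f bs y -> x = y.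
Proof.
move=> hf f_inj; elim: bs x y => [|b bs IH] x y; first by rewrite /total_size big_nil.
rewrite total_size_cons /= => hx hy.
case: (ltnP x (bsize b)) => h1; case: (ltnP y (bsize b)) => h2.
- exact: f_inj.
- by have := hf b x h1; lia.
- by have := hf b y h2; lia.
- move=> e; have : x - bsize b = y - bsize b by apply: IH; lia.
  lia.
Qed.

Lemma blockmap_orbit bs x y : x < total_size bs -> y < total_size bs ->
  (exists i, y = blockmap (brot i) bs x) <-> blockmap bkey bs y = blockmap bkey bs x.
Proof.
elim: bs x y => [|b bs IH] x y; first by rewrite /total_size big_nil.
rewrite total_size_cons /= => hx hy.
case: (ltnP x (bsize b)) => h1; case: (ltnP y (bsize b)) => h2.
- exact: bkey_orbit.
- split=> [[i e]|]; first by have := brot_bounded i h1; lia.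
  by have := bkey_bounded h1; lia.
- split=> [[i e]|]; first by have := brot_bounded i h2; lia.
  by have := bkey_bounded h2; lia.
- have [||to_key of_key] := IH (x - bsize b) (y - bsize b); try lia.
  split=> [[i e]|e]; first by rewrite to_key //; exists i; lia.
  by have [|i ei] := of_key; [lia | exists i; lia].
Qed.

Lemma blockval_class_sum w bs x : x < total_size bs ->
  \sum_(y <- iota 0 (total_size bs) | blockmap bkey bs y == blockmap bkey bs x)
    blockval w bs y =
  blockval (fun b j => \sum_(j' <- iota (bkey b j) (blen b)) w b j') bs x.
Proof.
elim: bs x => [|b bs IH] x; first by rewrite /total_size big_nil.
rewrite total_size_cons => hx.
rewrite iotaD big_cat /= add0n -[in iota (bsize b) _](addn0 (bsize b)) iotaDl big_map.
have [h|h] := ltnP x (bsize b).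
  rewrite -bkey_class_sum // [X in _ + X]big_seq_cond [X in _ + X]big1 ?addn0; last first.
    by move=> y /andP[_ /eqP]; have := bkey_bounded h; rewrite /= ifF //; lia.
  rewrite big_seq_cond [RHS]big_seq_cond; apply: eq_big => [y|y /andP[]].
    by rewrite mem_iota /=; case: ltnP.
  by rewrite mem_iota /= => ->.
rewrite big_seq_cond big1 ?add0n => [|y /andP[]]; last first.
  rewrite mem_iota add0n /= => hy /eqP; have := bkey_bounded hy; rewrite hy; lia.
rewrite -IH; last lia.
by apply: eq_big => [y|y _]; rewrite /= ifF ?addKn ?eqn_add2l //; lia.
Qed.

Lemma count_blockval (P : nat -> nat -> bool) f g bs :
  count (fun y => P (blockval f bs y) (blockval g bs y)) (iota 0 (total_size bs)) =
  \sum_(b <- bs) count (fun j => P (f b j) (g b j)) (iota 0 (bsize b)).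
Proof.
elim: bs => [|b bs IH]; first by rewrite /total_size !big_nil.
rewrite total_size_cons big_cons iotaD count_cat add0n.
rewrite -[in iota (bsize b) _](addn0 (bsize b)) iotaDl count_map -IH.
congr (_ + _); first by apply: eq_in_count => j; rewrite mem_iota /= => ->.
apply: eq_count => j /=; have -> : (bsize b + j < bsize b) = false by lia.
by rewrite addKn.
Qed.

Lemma card_porbit_points (T : finType) (s : {perm T}) (Q : pred {set T}) :
  #|[set x | Q (porbit s x)]| = \sum_(C in porbits s | Q C) #|C|.
Proof.
rewrite -sum1_card (partition_big (porbit s) (fun C => (C \in porbits s) && Q C)); last first.
  by move=> x; rewrite inE => Qx; rewrite imset_f.
apply: eq_bigr => C /andP[/imsetP[y _ ->] QC]; rewrite -sum1_card; apply: eq_bigl => x.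
rewrite inE eq_porbit_mem; case: (boolP (x \in porbit s y)) => [xy|]; rewrite ?andbF //.
by rewrite andbT; move: xy; rewrite -eq_porbit_mem => /eqP ->.
Qed.

Lemma muln_cycle_mult r n (p : gelt r n) (t : 'I_r) l :
  l * cycle_mult p t l =
  #|[set x | (#|porbit p.2 x| == l) && (cycle_color p (porbit p.2 x) == t)]|.
Proof.
rewrite (card_porbit_points p.2 (fun C => (#|C| == l) && (cycle_color p C == t))).
rewrite /cycle_mult -sum1_card big_distrr /= muln1 big_mkcond [RHS]big_mkcond /=.
apply: eq_bigr => C _; rewrite inE; case: (C \in porbits p.2) => //=.
by case: eqP => //= ->; case: eqP.
Qed.

Lemma cycle_mult0 r n (p : gelt r n) (t : 'I_r) : cycle_mult p t 0 = 0.
Proof.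
apply/eqP; rewrite cards_eq0; apply/eqP/setP => C; rewrite !inE.
by apply/negP => /andP[/imsetP[x _ ->] /andP[]]; rewrite (negbTE (card_porbit_neq0 _ _)).
Qed.

Lemma sum_ord_pred n (Q : pred nat) (F : nat -> nat) :
  \sum_(u in [set u : 'I_n | Q u]) F u = \sum_(y <- iota 0 n | Q y) F y.
Proof.
have -> : iota 0 n = index_iota 0 n by rewrite /index_iota subn0.
by rewrite big_mkord; apply: eq_bigl => u; rewrite inE.
Qed.

Lemma card_ord_pred n (Q : pred nat) : #|[set u : 'I_n | Q u]| = count Q (iota 0 n).
Proof. by rewrite -sum1_card (@sum_ord_pred n Q (fun _ => 1)) sum1_count. Qed.

Definition on_ord n (f : nat -> nat) (x : 'I_n) : 'I_n := insubd x (f x).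

Lemma on_ordE n (f : nat -> nat) (x : 'I_n) : f x < n -> val (on_ord f x) = f x.
Proof. by move=> fx; rewrite val_insubd fx. Qed.

Section BlockRoot.
Variables (r n : nat) (bs : seq block).
Hypotheses (r_gt0 : 0 < r) (bs_size : total_size bs = n).

Local Notation root := (blockmap broot bs).

Let lt_size (x : 'I_n) : x < total_size bs.
Proof. by rewrite bs_size. Qed.

Let iota_size : iota 0 n = iota 0 (total_size bs).
Proof. by rewrite bs_size. Qed.

Lemma root_lt x : x < n -> root x < n.
Proof. by rewrite -bs_size => hx; apply: blockmap_lt => //; exact: broot_bounded. Qed.

Lemma rootK x : x < n -> root (root x) = blockmap (brot 1) bs x.
Proof.
rewrite -bs_size => hx; rewrite blockmap_comp //; last exact: broot_bounded.
exact: eq_blockmap brootK.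
Qed.

Lemma root_inj : injective (@on_ord n root).
Proof.
move=> x y /(congr1 val); rewrite !on_ordE ?root_lt // => /(congr1 root).
rewrite !rootK // => e; apply: val_inj.
by apply: (blockmap_inj (@brot_bounded 1)) e => //; exact: brot1_inj.
Qed.

Definition root_perm : {perm 'I_n} := perm root_inj.

Lemma root_permE x : val (root_perm x) = root x.
Proof. by rewrite permE on_ordE ?root_lt. Qed.

Lemma root_perm_sqrX i x :
  val (((root_perm * root_perm) ^+ i)%g x) = blockmap (brot i) bs x.
Proof.
elim: i => [|i IH].
  by rewrite expg0 perm1 -[LHS](blockmap_id bs); apply: eq_blockmap => b j /brot0 ->.
have hi : blockmap (brot i) bs x < n.
  by have := blockmap_lt (@brot_bounded i) (lt_size x); rewrite bs_size.
rewrite expgSr !permM !root_permE IH rootK // blockmap_comp //; last exact: brot_bounded.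
by apply: eq_blockmap => b j _; rewrite brotD addn1.
Qed.

Definition root_color : {ffun 'I_n -> 'I_r} :=
  [ffun u : 'I_n => Ordinal (ltn_pmod (blockval bz bs u) r_gt0)].

Definition root_elt : gelt r n := (root_color, root_perm).

Local Notation P := (porbit (root_perm * root_perm)%g).

Lemma porbit_root_sqr x :
  P x = [set y : 'I_n | blockmap bkey bs y == blockmap bkey bs x].
Proof.
apply/setP => y; rewrite inE; have key_orbit := blockmap_orbit (lt_size x) (lt_size y).
apply/porbitP/eqP => [[i yE]|/key_orbit[i e]].
  by apply/key_orbit; exists i; rewrite yE root_perm_sqrX.
by exists i; apply: val_inj; rewrite root_perm_sqrX.
Qed.

Lemma card_porbit_root_sqr x : #|P x| = blockval (fun b _ => blen b) bs x.
Proof.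
rewrite porbit_root_sqr (@card_ord_pred n (fun z => blockmap bkey bs z == blockmap bkey bs x)).
rewrite -sum1_count iota_size.
rewrite big_seq_cond (eq_bigr (fun y => blockval (fun _ _ => 1) bs y)); last first.
  by move=> y /andP[]; rewrite mem_iota => /andP[_ /blockval_const].
rewrite -big_seq_cond blockval_class_sum //; apply: eq_blockval => b j _.
by rewrite sum1_size size_iota.
Qed.

Lemma zsum_porbit_root_sqr x : zsum root_elt (P x) = blockval bmass bs x %[mod r].
Proof.
rewrite /zsum /=; under eq_bigr => u _ do rewrite ffunE /=.
rewrite modn_summ porbit_root_sqr.
rewrite (@sum_ord_pred n (fun z => blockmap bkey bs z == blockmap bkey bs x)) iota_size.
rewrite blockval_class_sum //; congr (_ %% r).
by apply: eq_blockval => b j; exact: bz_class_sum.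
Qed.

Lemma cycle_color_root_sqr x :
  cycle_color (gmul root_elt root_elt) (P x) = blockval (fun b _ => bcolor b) bs x %% r.
Proof.
rewrite cycle_color_porbit_sqr -modnDm !zsum_porbit_root_sqr modnDm /= root_permE.
rewrite blockval_comp //; last exact: broot_bounded.
by rewrite blockvalD; congr (_ %% r); apply: eq_blockval => b j; exact: bmass_broot.
Qed.

Lemma muln_cycle_mult_root (t : 'I_r) l :
  l * cycle_mult (gmul root_elt root_elt) t l =
  \sum_(b <- bs) ((blen b == l) && (bcolor b %% r == t)) * bsize b.
Proof.
rewrite muln_cycle_mult /=.
under eq_finset => x do rewrite card_porbit_root_sqr cycle_color_root_sqr.
rewrite (@card_ord_pred n (fun y => (blockval (fun b _ => blen b) bs y == l) &&
                                 (blockval (fun b _ => bcolor b) bs y %% r == t))).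
rewrite iota_size (count_blockval (fun a c => (a == l) && (c %% r == t))).
by apply: eq_bigr => b _; case: (_ && _); rewrite ?count_predT ?count_pred0 ?size_iota ?mul1n.
Qed.

End BlockRoot.

(* [(r + 1) / 2] is the inverse of [2] modulo an odd [r]. *)
Definition half_color r t := if odd r then (t * r.+1./2) %% r else t./2.

Lemma half_colorK r t : t < r -> odd r || ~~ odd t ->
  (half_color r t + half_color r t) %% r = t.
Proof.
move=> tr; rewrite /half_color; case: ifP => [odd_r _ | _ /= even_t].
  rewrite modnDm addnn doubleMr.
  have -> : r.+1./2.*2 = r.+1 by rewrite -[RHS]odd_double_half /= odd_r.
  by rewrite mulnS addnC modnMDl modn_small.
by rewrite addnn -[X in _ = X]odd_double_half (negbTE even_t) modn_small // -addnn; lia.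
Qed.

(* The cycles of length [l] and color [t]: each is the square of an [l]-cycle of color
   [t / 2] when [l] is odd and [t] can be halved; otherwise they come in pairs, each
   pair being the square of a [2l]-cycle of color [t]. *)
Definition color_blocks r (s : seq nat) (t l : nat) : seq block :=
  if odd l && (odd r || ~~ odd t) then nseq (count_mem l s) (Block false l./2 (half_color r t))
  else nseq (count_mem l s)./2 (Block true l.-1 t).

Definition root_blocks r (lam : 'I_r -> seq nat) : seq block :=
  flatten [seq flatten [seq color_blocks r (lam t) t l | l <- undup (lam t)]
          | t <- index_enum 'I_r].

Lemma sum_color_blocks r s t l (F : nat -> nat -> nat) : t < r -> 0 < l ->
  (~~ (odd l && (odd r || ~~ odd t)) -> ~~ odd (count_mem l s)) ->
  \sum_(b <- color_blocks r s t l) F (blen b) (bcolor b %% r) * bsize b =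
  count_mem l s * (F l t * l).
Proof.
move=> tr l_gt0 even_count; rewrite /color_blocks.
case: ifP => [/andP[odd_l halvable] | not_halvable]; rewrite big_nseq iter_addn_0.
  have l_odd : l./2.*2.+1 = l by rewrite -[RHS]odd_double_half odd_l.
  by rewrite /bsize /blen /bcolor /= l_odd half_colorK // mulnC.
have := even_count (negbT not_halvable) => /negbTE even_cnt.
have cnt_even : (count_mem l s)./2.*2 = count_mem l s.
  by rewrite -[RHS]odd_double_half even_cnt.
rewrite /bsize /blen /bcolor /= prednK // modn_small // -[in RHS]cnt_even -muln2; lia.
Qed.

Lemma sum_undup (s : seq nat) (G : nat -> nat) :
  \sum_(l <- undup s) count_mem l s * G l = \sum_(l <- s) G l.
Proof.
rewrite -(big_undup_iterop_count _ s xpredT G).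
by apply: eq_bigr => l _; rewrite Monoid.iteropE iter_addn_0 mulnC.
Qed.

Section RootBlocks.
Variables (r : nat) (lam : 'I_r -> seq nat).
Hypothesis lam_pos : forall t, all (fun l => 0 < l) (lam t).
Hypothesis lam_even :
  forall (t : 'I_r) l, ~~ (odd l && (odd r || ~~ odd t)) -> ~~ odd (count_mem l (lam t)).

Lemma sum_root_blocks (F : nat -> nat -> nat) :
  \sum_(b <- root_blocks lam) F (blen b) (bcolor b %% r) * bsize b =
  \sum_(t < r) \sum_(l <- lam t) F l t * l.
Proof.
rewrite /root_blocks big_flatten big_map; apply: eq_bigr => t _.
rewrite big_flatten big_map -sum_undup [LHS]big_seq [RHS]big_seq.
apply: eq_bigr => l; rewrite mem_undup => l_in.
apply: sum_color_blocks; first exact: ltn_ord.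
  exact: allP (lam_pos t) l l_in.
exact: lam_even.
Qed.

Lemma total_size_root_blocks : total_size (root_blocks lam) = \sum_(t < r) sumn (lam t).
Proof.
transitivity (\sum_(b <- root_blocks lam) (fun _ _ => 1) (blen b) (bcolor b %% r) * bsize b).
  by apply: eq_bigr => b _; rewrite mul1n.
rewrite (sum_root_blocks (fun _ _ => 1)); apply: eq_bigr => t _.
by rewrite sumnE; apply: eq_bigr => l _; rewrite mul1n.
Qed.

Lemma cycle_mult_root_blocks n (r_gt0 : 0 < r) (size_n : total_size (root_blocks lam) = n)
    (t : 'I_r) l :
  let pi := root_elt r_gt0 size_n in cycle_mult (gmul pi pi) t l = count_mem l (lam t).
Proof.
move=> pi; have [->|l_gt0] := posnP l.
  by rewrite cycle_mult0; apply/esym/count_memPn/negP => /(allP (lam_pos t)).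
apply/eqP; rewrite -(eqn_pmul2l l_gt0) muln_cycle_mult_root.
rewrite (sum_root_blocks (fun a c => (a == l) && (c == t))) (bigD1 t) //=.
rewrite [X in _ + X]big1 ?addn0 => [|t' t't]; last first.
  by rewrite big1 // => l' _; rewrite (negbTE (t't : val t' != val t)) andbF.
apply/eqP; under eq_bigr do rewrite eqxx andbT.
elim: (lam t) => [|a s IH]; first by rewrite big_nil muln0.
by rewrite big_cons /= IH mulnDr; case: eqP => [->|_]; rewrite ?mul1n ?muln1 ?mul0n ?muln0.
Qed.

End RootBlocks.

Theorem proposition6p3 (r n : nat) (lam : 'I_r -> seq nat) :
  (0 < r)%N -> is_rpartition n lam ->
  ((exists pi : gelt r n, has_cycle_type (gmul pi pi) lam) <->
   ((forall (t : 'I_r) (l : nat), ~~ odd l -> ~~ odd (count_mem l (lam t))) /\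
    (~~ odd r -> forall (t : 'I_r) (l : nat), odd t -> odd l ->
        ~~ odd (count_mem l (lam t))))).
Proof.
move=> r_gt0 [lam_part lam_size]; split=> [[pi pi_type]|[even_l even_r]].
  split=> [t l even_l|even_r t l odd_t _]; rewrite pi_type; apply: even_cycle_mult_sqr.
    by left.
  by right.
have lam_pos t : all (fun l => 0 < l) (lam t) by case/andP: (lam_part t).
have lam_even (t : 'I_r) l :
    ~~ (odd l && (odd r || ~~ odd t)) -> ~~ odd (count_mem l (lam t)).
  case: (boolP (odd l)) => [odd_l|even_l' _]; last exact: even_l.
  by rewrite /= negb_or negbK => /andP[even_r' odd_t]; exact: even_r.
have size_n : total_size (root_blocks lam) = n by rewrite total_size_root_blocks.
by exists (root_elt r_gt0 size_n) => t l; rewrite cycle_mult_root_blocks.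
Qed.
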